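(* Let $(X,Y)$ be a conditionally dependent (CD) random vector with function $s$. Then $s$ is bounded on $D_Y$: there exists $C>0$ such that $s(y)\le C$ for all $y\in D_Y$.
   Context: $X$ is real-valued with distribution $F$ such that $\overline F(x)=1-F(x)>0$ for all $x\in\mathbb{R}$, and $Y$ takes values in $(0,\infty)$ with distribution $G$. Let $D_Y=\{y\in(0,\infty):\mathrm P(Y\in(y-\delta,y+\delta))>0\ \forall\delta>0\}$. For $x\in\mathbb{R}$ and $y\in D_Y$, $\mathrm P(X>x\mid Y=y)=\lim_{t\downarrow0}\mathrm P(X>x,Y\in[y,y+t))/\mathrm P(Y\in[y,y+t))$ when this limit exists. $(X,Y)$ is conditionally dependent (CD) with function $s$ if $s$ is a positive measurable function on $[0,\infty)$ such that these conditional tails exist and $\lim_{x\to\infty}\sup_{y\in D_Y}|\mathrm P(X>x\mid Y=y)/(\overline F(x)s(y))-1|=0$. *)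

From HB Require Import structures.
From mathcomp Require Import all_boot all_order all_algebra.
From mathcomp Require Import all_classical all_reals all_analysis.
Set Implicit Arguments. Unset Strict Implicit. Unset Printing Implicit Defensive.
Import Order.TTheory GRing.Theory Num.Theory.
Import numFieldNormedType.Exports.
Local Open Scope classical_set_scope.
Local Open Scope ring_scope.

Section CD.
Context {d : measure_display} {T : measurableType d} {R : realType}
  (P : probability T R).

Definition prob (A : set T) : R := fine (P A).

Definition Ftail (X : T -> R) (x : R) : R := prob [set w | x < X w].

Definition DY (Y : T -> R) : set R :=
  [set y | 0 < y /\ forall δ : R, 0 < δ ->
     0 < prob (Y @^-1` `](y - δ), (y + δ)[)].

(* P(X > x | Y = y) exists and equals l: the ratio
   P(X > x, Y in [y,y+t)) / P(Y in [y,y+t)) is (eventually) well defined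
   and tends to l as t decreases to 0. *)
Definition cond_tail_is (X Y : T -> R) (x y l : R) : Prop :=
  (\forall t \near 0^'+, 0 < prob (Y @^-1` `[y, (y + t)[)) /\
  ((fun t => prob ([set w | x < X w] `&` Y @^-1` `[y, (y + t)[) /
             prob (Y @^-1` `[y, (y + t)[)) @ 0^'+ --> l).

Definition CD (X Y : T -> R) (s : R -> R) : Prop :=
  (forall y, 0 <= y -> 0 < s y) /\
  measurable_fun (`[0, +oo[%classic : set R) s /\
  exists cp : R -> R -> R,
    (forall x y, DY Y y -> cond_tail_is X Y x y (cp x y)) /\
    ((fun x => ereal_sup [set (`| cp x y / (Ftail X x * s y) - 1 |)%:E
                         | y in DY Y]) @ +oo --> 0%E).

End CD.

(* The conditional tails P(X > x | Y = y) are limits of ratios of nested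
   probabilities, hence at most 1.  Uniform convergence in the CD definition
   yields one level x0 at which P(X > x0 | Y = y) > F(x0) s(y) / 2 for every
   y in D_Y, so s(y) < 2 / F(x0) there. *)
From HB Require Import structures.
From mathcomp Require Import all_boot all_order all_algebra.
From mathcomp Require Import all_classical all_reals all_analysis.
From mathcomp Require Import lra.
Import Order.TTheory GRing.Theory Num.Theory.
Import numFieldNormedType.Exports.
Local Open Scope classical_set_scope.
Local Open Scope ring_scope.

Section conditional_tail.
Context {d : measure_display} {T : measurableType d} {R : realType}
  (P : probability T R).

Lemma le_prob (A B : set T) :
  measurable A -> measurable B -> A `<=` B -> prob P A <= prob P B.
Proof.
move=> mA mB AB; apply: fine_le; try exact: fin_num_measure.
by apply: le_measure => //; rewrite inE.
Qed.

Lemma cond_tail_le1 (X Y : {mfun T >-> R}) (x y l : R) :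
  cond_tail_is P X Y x y l -> l <= 1.
Proof.
move=> [Ypos ratio_cvg]; apply: (cvgr_to_le ratio_cvg).
apply: filterS Ypos => t Yt; rewrite ler_pdivrMr // mul1r.
have mXgt : measurable [set w | x < X w].
  rewrite (_ : [set w | x < X w] = X @^-1` `]x, +oo[).
    exact: measurable_funPTI.
  by apply/seteqP; split => w /=; rewrite in_itv /= andbT.
apply: le_prob; first apply: measurableI => //.
- exact: measurable_funPTI.
- exact: measurable_funPTI.
- by move=> w [].
Qed.

End conditional_tail.

Lemma ereal_sup_cvg0_uniform {R : realType} {I : Type} {A : set I}
    {g : R -> I -> R} :
  (fun x => ereal_sup [set (g x y)%:E | y in A]) @ +oo --> 0%E ->
  forall e, 0 < e -> \forall x \near +oo, forall y, A y -> g x y < e.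
Proof.
move=> /fine_cvgP [sup_fin sup_cvg] e e_gt0.
near=> x => y Ay.
have supx_fin : ereal_sup [set (g x y)%:E | y in A] \is a fin_num.
  by near: x.
have gx_le_sup : ((g x y)%:E <= ereal_sup [set (g x z)%:E | z in A])%E.
  by apply: ereal_sup_ubound; exists y.
rewrite -lte_fin (le_lt_trans gx_le_sup) // -(fineK supx_fin) lte_fin.
by near: x; exact: (cvgr_lt _ sup_cvg).
Unshelve. all: by end_near.
Qed.

Lemma lt_inv_of_ratio_gt {R : realFieldType} {a b c e : R} :
  0 < a -> 0 < b -> 0 < e -> c <= 1 -> e < c / (a * b) -> b < e^-1 / a.
Proof.
move=> a_gt0 b_gt0 e_gt0 c_le1.
rewrite ltr_pdivlMr ?mulr_gt0 // => ecab.
rewrite ltr_pdivlMr // -(ltr_pM2l e_gt0) divff ?gt_eqF // [b * a]mulrC.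
exact: lt_le_trans c_le1.
Qed.

Theorem proposition2p4 (d : measure_display) (T : measurableType d)
  (R : realType) (P : probability T R) (X Y : {RV P >-> R}) (s : R -> R) :
  (forall x : R, 0 < Ftail P X x) ->
  (forall w, 0 < Y w) ->
  CD P X Y s ->
  exists C : R, 0 < C /\ forall y, DY P Y y -> s y <= C.
Proof.
move=> F_gt0 _ [s_gt0 [_ [cp [cp_tail sup_cvg]]]].
have half_gt0 : (0 : R) < 2^-1 by rewrite invr_gt0.
have [x0 close] := filter_ex (ereal_sup_cvg0_uniform sup_cvg _ half_gt0).
exists (2 / Ftail P X x0); split; first by rewrite divr_gt0.
move=> y Dy; apply/ltW; rewrite -[X in X / _]invrK.
apply: (lt_inv_of_ratio_gt (F_gt0 x0) (s_gt0 _ (ltW Dy.1)) half_gt0).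
  exact: cond_tail_le1 (cp_tail x0 y Dy).
by move: (close y Dy); rewrite ltr_norml => /andP[+ _]; lra.
Qed.
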